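(* Let $L$ be an $\mathbb{M}$-compositional family of lattice-closed logics. The following statements are equivalent: (1) $L$ is varietal; (2) every theory algebra $\Theta_\Delta\Sigma$ (for an alphabet $\Sigma$ and a sort-wise finite subfamily $\Delta\subseteq L$ such that $\sqsubseteq_{\Delta[\Gamma]}$ is a congruence ordering on $\mathbb{M}\Gamma$ for all alphabets $\Gamma$) is $L$-definable; (3) the class of $L$-definable languages is closed under inverse morphisms, i.e. $\psi^{-1}[K]$ is $L$-definable for every $L$-definable $K\subseteq\mathbb{M}_\xi\Gamma$ and every morphism of $\mathbb{M}$-algebras $\psi:\mathbb{M}\Sigma\to\mathbb{M}\Gamma$.
   Context: Fix a set $\Xi$ of sorts; $\mathsf{Pos}^\Xi$: $\Xi$-sorted families of partial orders with sort-wise monotone maps. $\mathbb{M}$ is a monad on $\mathsf{Pos}^\Xi$ ($\mathrm{flat},\mathrm{sing}$) preserving injective, surjective, bijective functions and preimages and using the standard ordering. $\mathbb{M}$-algebras $\langle A,\pi\rangle$: $\pi\circ\mathbb{M}\pi=\pi\circ\mathrm{flat}$, $\pi\circ\mathrm{sing}=\mathrm{id}$. Finitary: sort-wise finite and finitely generated. A preorder $\sqsubseteq$ on $A$ containing its order is a congruence ordering if $\mathbb{M}q(s)\leq\mathbb{M}q(t)\Rightarrow\pi(s)\sqsubseteq\pi(t)$, $q$ the quotient map to the ordered set of classes; the quotient algebra has product given by $\pi\circ\mathbb{M}q=q\circ\pi$. Alphabet: finite unordered $\Sigma$; language: $K\subseteq\mathbb{M}_\xi\Sigma$. Contexts, derivatives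 $p^{-1}[K]$ (with $p\in\mathbb{M}(\Sigma+\{\Box\})$, $p[s]$ the image under the algebra morphism $\Box\mapsto s$, $c\mapsto\mathrm{sing}(c)$). Variety of languages: family of classes of languages closed under finite unions, intersections, inverse morphisms between free algebras, and derivatives. A logic $\langle L,\mathcal{M},\models\rangle$: $\Xi$-sorted formulae and models with satisfaction between same sorts; $\mathrm{Mod}(\varphi)$ its models; a class is $L$-definable if it is $\mathrm{Mod}(\varphi)$; $L$ is lattice closed if definable classes of each sort are closed under finite unions and intersections. For a set $\Delta$ of formulae, $M\sqsubseteq_\Delta N$ iff every formula of $\Delta$ true in $M$ is true in $N$. A family of logics $L$ assigns to each alphabet $\Sigma$ a logic $L[\Sigma]$ with models $\mathbb{M}\Sigma$ (sort-wise), and to each $f:\Sigma\to\Gamma$ a sort-preserving $\lambda_f:L[\Gamma]\to L[\Sigma]$ with $s\models\lambda_f(\varphi)\iff\mathbb{M}f(s)\models\varphi$. $K\subseteq\mathbb{M}_\xi\Sigma$ is $L$-definable if $K=\mathrm{Mod}(\varphi)$, $\varphi\in L_\xi[\Sigma]$; for a finite ordered $C$, $K\subseteq\mathbb{M}C$ is $L$-definable if $(\mathbb{M}\iota)^{-1}[K]\subseteq\mathbb{M}\mathbb{V}C$ is, $\mathbb{V}C$ being $C$ with trivial order and $\iota$ the identity. $L$ is varietal if $L$-definable languages form a variety of languages. A subfamily $\Delta\subseteq L$ picks $\Delta[\Sigma]\subseteq L[\Sigma]$; it is finite (sort-wise finite) if each $\Delta[\Sigma]$ is finite (finite in each sort)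 up to logical equivalence. $L$ is $\mathbb{M}$-compositional if for every finite subfamily $\Phi$ there is a sort-wise finite $\Delta$ with $\Phi\subseteq\Delta\subseteq L$ such that $\sqsubseteq_{\Delta[\Sigma]}$ is a congruence ordering on $\mathbb{M}\Sigma$ for every alphabet $\Sigma$; for such $\Delta$, $\Theta_\Delta\Sigma:=\mathbb{M}\Sigma/{\sqsubseteq_{\Delta[\Sigma]}}$ with quotient morphism $\theta_\Delta$. A finite $C\subseteq A$ is $L$-definably embedded if $\pi^{-1}(\uparrow a)\cap\mathbb{M}C$ is $L$-definable for every $a\in A$; $\mathfrak{A}$ is $L$-definable if finitary and all its finite subsets are $L$-definably embedded. *)

From Stdlib Require Import List PropExtensionality FunctionalExtensionality
  ProofIrrelevance ClassicalEpsilon.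
Import ListNotations.

Record sPos (Xi : Type) := SPos {
  car : Xi -> Type;
  le : forall x, car x -> car x -> Prop;
  le_refl : forall x a, le x a a;
  le_trans : forall x a b c, le x a b -> le x b c -> le x a c;
  le_anti : forall x a b, le x a b -> le x b a -> a = b }.
Arguments SPos {Xi}.
Arguments car {Xi} _ _.
Arguments le {Xi} _ {x} _ _.
Arguments le_refl {Xi} _ x a.
Arguments le_trans {Xi} _ x a b c.
Arguments le_anti {Xi} _ x a b.

Record hom {Xi : Type} (A B : sPos Xi) := Hom {
  app : forall x, car A x -> car B x;
  app_mono : forall x a b, le A a b -> le B (app x a) (app x b) }.
Arguments Hom {Xi A B}.
Arguments app {Xi A B} _ {x} _.
Arguments app_mono {Xi A B} _ {x a b} _.

Definition hid {Xi} (A : sPos Xi) : hom A A :=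
  Hom (fun x a => a) (fun x a b h => h).
Definition hcomp {Xi} {A B C : sPos Xi} (g : hom B C) (f : hom A B) : hom A C :=
  Hom (fun x a => app g (app f a)) (fun x a b h => app_mono g (app_mono f h)).

Definition injective_h {Xi} {A B : sPos Xi} (f : hom A B) : Prop :=
  forall x (a b : car A x), app f a = app f b -> a = b.
Definition surjective_h {Xi} {A B : sPos Xi} (f : hom A B) : Prop :=
  forall x (b : car B x), exists a : car A x, app f a = b.
Definition bijective_h {Xi} {A B : sPos Xi} (f : hom A B) : Prop :=
  injective_h f /\ surjective_h f.

Definition sub {Xi} (A : sPos Xi) (P : forall x, car A x -> Prop) : sPos Xi.
Proof.
  refine (SPos (fun x => {a : car A x | P x a})
            (fun x a b => le A (proj1_sig a) (proj1_sig b)) _ _ _).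
  - intros x a; apply le_refl.
  - intros x a b c; apply le_trans.
  - intros x [a pa] [b pb] h1 h2; simpl in *.
    pose proof (le_anti A x a b h1 h2); subst. f_equal; apply proof_irrelevance.
Defined.
Definition incl {Xi} (A : sPos Xi) P : hom (sub A P) A :=
  @Hom _ (sub A P) A (fun x (a : car (sub A P) x) => proj1_sig a) (fun x a b h => h).

Definition prodP {Xi} (A : sPos Xi) : sPos Xi.
Proof.
  refine (SPos (fun x => (car A x * car A x)%type)
            (fun x p q => le A (fst p) (fst q) /\ le A (snd p) (snd q)) _ _ _).
  - intros x p; split; apply le_refl.
  - intros x p q r [h1 h2] [h3 h4]; split; eapply le_trans; eauto.
  - intros x [a b] [c d] [h1 h2] [h3 h4]; simpl in *.
    f_equal; apply le_anti; assumption.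
Defined.
Definition lepairs {Xi} (A : sPos Xi) : sPos Xi :=
  sub (prodP A) (fun x p => le A (fst p) (snd p)).
Definition lp0 {Xi} (A : sPos Xi) : hom (lepairs A) A.
Proof. refine (@Hom _ (lepairs A) A (fun x (p : car (lepairs A) x) => fst (proj1_sig p)) _). intros x p q [h _]; exact h. Defined.
Definition lp1 {Xi} (A : sPos Xi) : hom (lepairs A) A.
Proof. refine (@Hom _ (lepairs A) A (fun x (p : car (lepairs A) x) => snd (proj1_sig p)) _). intros x p q [_ h]; exact h. Defined.

Record Monad (Xi : Type) := {
  MO : sPos Xi -> sPos Xi;
  Mmap : forall A B : sPos Xi, hom A B -> hom (MO A) (MO B);
  sing : forall A, hom A (MO A);
  flat : forall A, hom (MO (MO A)) (MO A);
  Mmap_ext : forall A B (f g : hom A B),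
      (forall x (a : car A x), app f a = app g a) ->
      forall x (s : car (MO A) x), app (Mmap A B f) s = app (Mmap A B g) s;
  Mmap_id : forall A x (s : car (MO A) x), app (Mmap A A (hid A)) s = s;
  Mmap_comp : forall A B C (f : hom A B) (g : hom B C) x (s : car (MO A) x),
      app (Mmap A C (hcomp g f)) s = app (Mmap B C g) (app (Mmap A B f) s);
  sing_nat : forall A B (f : hom A B) x (a : car A x),
      app (Mmap A B f) (app (sing A) a) = app (sing B) (app f a);
  flat_nat : forall A B (f : hom A B) x (s : car (MO (MO A)) x),
      app (Mmap A B f) (app (flat A) s)
      = app (flat B) (app (Mmap (MO A) (MO B) (Mmap A B f)) s);
  flat_sing : forall A x (s : car (MO A) x), app (flat A) (app (sing (MO A)) s) = s;
  flat_Msing : forall A x (s : car (MO A) x),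
      app (flat A) (app (Mmap A (MO A) (sing A)) s) = s;
  flat_flat : forall A x (s : car (MO (MO (MO A))) x),
      app (flat A) (app (flat (MO A)) s)
      = app (flat A) (app (Mmap (MO (MO A)) (MO A) (flat A)) s) }.
Arguments MO {Xi} _ _.
Arguments Mmap {Xi} _ {A B} _.
Arguments sing {Xi} _ A.
Arguments flat {Xi} _ A.

Section MonadProps.
Context {Xi : Type} (M : Monad Xi).

Definition preserves_inj : Prop :=
  forall (A B : sPos Xi) (f : hom A B), injective_h f -> injective_h (Mmap M f).
Definition preserves_surj : Prop :=
  forall (A B : sPos Xi) (f : hom A B), surjective_h f -> surjective_h (Mmap M f).
Definition preserves_bij : Prop :=
  forall (A B : sPos Xi) (f : hom A B), bijective_h f -> bijective_h (Mmap M f).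
(* M(f^{-1}[C]) = (Mf)^{-1}[MC], subsets of MA / MB identified via M(inclusion) *)
Definition preserves_preimages : Prop :=
  forall (A B : sPos Xi) (f : hom A B) (P : forall x, car B x -> Prop)
         x (s : car (MO M A) x),
    (exists t : car (MO M (sub B P)) x, app (Mmap M (incl B P)) t = app (Mmap M f) s) ->
    exists u : car (MO M (sub A (fun y a => P y (app f a)))) x,
      app (Mmap M (incl A _)) u = s.
Definition std_ordering : Prop :=
  forall (A : sPos Xi) x (s t : car (MO M A) x),
    le (MO M A) s t <->
    exists u : car (MO M (lepairs A)) x,
      app (Mmap M (lp0 A)) u = s /\ app (Mmap M (lp1 A)) u = t.
End MonadProps.

Record nice_monad {Xi : Type} (M : Monad Xi) : Prop := {
  nm_inj : preserves_inj M;
  nm_surj : preserves_surj M;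
  nm_bij : preserves_bij M;
  nm_preim : preserves_preimages M;
  nm_std : std_ordering M }.

Definition fin_total {Xi} (F : Xi -> Type) : Prop :=
  exists l : list {x : Xi & F x}, forall x (a : F x), In (existT F x a) l.
Definition sortwise_fin {Xi} (F : Xi -> Type) : Prop :=
  forall x, exists l : list (F x), forall a, In a l.

Definition disc {Xi} (F : Xi -> Type) : sPos Xi.
Proof.
  refine (SPos F (fun x a b => a = b) _ _ _).
  - reflexivity.
  - intros; subst; reflexivity.
  - intros x a b h _; exact h.
Defined.
Definition hom_of_disc {Xi} {F : Xi -> Type} {B : sPos Xi}
  (f : forall x, F x -> car B x) : hom (disc F) B.
Proof. refine (@Hom _ (disc F) B f _). intros x a b h; cbn in h; subst; apply le_refl. Defined.

Record Alphabet (Xi : Type) := { acar : Xi -> Type; afin : fin_total acar }.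
Arguments Build_Alphabet {Xi}.
Arguments acar {Xi} _ _.
Arguments afin {Xi} _.

Definition FA {Xi} (M : Monad Xi) (S : Alphabet Xi) : sPos Xi := MO M (disc (acar S)).

(* Sigma + {box}, the box having sort z *)
Definition boxcar {Xi} (F : Xi -> Type) (z : Xi) : Xi -> Type :=
  fun x => (F x + (z = x))%type.
Lemma box_fin {Xi} (F : Xi -> Type) z : fin_total F -> fin_total (boxcar F z).
Proof.
  intros [l Hl].
  exists (existT (boxcar F z) z (inr eq_refl)
          :: map (fun p : {x & F x} => existT (boxcar F z) (projT1 p) (inl (projT2 p))) l).
  intros x [a|e].
  - right.
    apply (in_map (fun p : {x & F x} => existT (boxcar F z) (projT1 p) (inl (projT2 p)))
              l (existT F x a)). apply Hl.
  - destruct e. left. reflexivity.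
Qed.
Definition boxA {Xi} (S : Alphabet Xi) (z : Xi) : Alphabet Xi :=
  Build_Alphabet (boxcar (acar S) z) (box_fin _ _ (afin S)).

Definition plug_map {Xi} (M : Monad Xi) (S : Alphabet Xi) z (s : car (FA M S) z)
  : hom (disc (boxcar (acar S) z)) (FA M S) :=
  hom_of_disc (fun x c => match c with
                          | inl a => app (sing M (disc (acar S))) (a : car (disc (acar S)) x)
                          | inr e => match e in _ = y return car (FA M S) y with
                                     | eq_refl => s end
                          end).
Definition plug {Xi} (M : Monad Xi) (S : Alphabet Xi) z x
  (p : car (FA M (boxA S z)) x) (s : car (FA M S) z) : car (FA M S) x :=
  app (flat M (disc (acar S))) (app (Mmap M (plug_map M S z s)) p).

Definition alg_mor {Xi} (M : Monad Xi) (S G : Alphabet Xi) (psi : hom (FA M S) (FA M G)) : Prop :=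
  forall x (s : car (MO M (FA M S)) x),
    app psi (app (flat M _) s) = app (flat M _) (app (Mmap M psi) s).

Section Quot.
Context {Xi : Type} (A : sPos Xi) (R : forall x, car A x -> car A x -> Prop).

Definition cong_pre : Prop :=
  (forall x a, R x a a) /\ (forall x a b c, R x a b -> R x b c -> R x a c) /\
  (forall x a b, le A a b -> R x a b).
Definition Req x a b := R x a b /\ R x b a.
Definition qcar x := {P : car A x -> Prop | exists a, forall b, P b <-> Req x a b}.
Definition qle x (P Q : qcar x) : Prop :=
  exists a b, proj1_sig P a /\ proj1_sig Q b /\ R x a b.

Context (H : cong_pre).

Lemma cls_rep x (P : qcar x) a : proj1_sig P a -> forall z, proj1_sig P z <-> Req x a z.
Proof.
  destruct H as [Hr [Ht _]]. destruct P as [P [a0 Ha0]]; simpl.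
  intros Pa z. apply Ha0 in Pa. destruct Pa as [p1 p2]. split.
  - intro hz; apply Ha0 in hz; destruct hz as [q1 q2]; split; eauto.
  - intros [q1 q2]; apply Ha0; split; eauto.
Qed.

Lemma cls_eq x (P Q : qcar x) : (forall z, proj1_sig P z <-> proj1_sig Q z) -> P = Q.
Proof.
  destruct P as [P pP], Q as [Q pQ]; simpl; intro h.
  assert (P = Q) by (extensionality z; apply propositional_extensionality; apply h).
  subst. f_equal. apply proof_irrelevance.
Qed.

Lemma cls_nonempty x (P : qcar x) : exists a, proj1_sig P a.
Proof.
  destruct H as [Hr _]. destruct P as [P [a Ha]]. exists a. simpl. apply Ha. split; apply Hr.
Qed.

Definition quot : sPos Xi.
Proof.
  refine (SPos qcar qle _ _ _).
  - intros x P. destruct (cls_nonempty x P) as [a Pa]. exists a, a.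
    split; [exact Pa|split; [exact Pa|apply (proj1 H)]].
  - intros x P Q T [a [b [Pa [Qb Rab]]]] [b' [c [Qb' [Tc Rbc]]]].
    exists a, c. split; [exact Pa|split; [exact Tc|]].
    destruct H as [_ [Ht _]].
    apply (cls_rep x Q b Qb b') in Qb'. destruct Qb' as [r1 _]. eauto.
  - intros x P Q [a [b [Pa [Qb Rab]]]] [b' [a' [Qb' [Pa' Rba]]]].
    destruct H as [Hr [Ht _]].
    pose proof (proj1 (cls_rep x Q b Qb b') Qb') as [r1 _].
    pose proof (proj1 (cls_rep x P a Pa a') Pa') as [_ r2].
    assert (Rba0 : R x b a) by eauto.
    apply cls_eq; intro z.
    rewrite (cls_rep x P a Pa z), (cls_rep x Q b Qb z).
    unfold Req; split; intros [u v]; split; eauto.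
Defined.

Definition qcls x (a : car A x) : qcar x :=
  exist _ (fun b => Req x a b) (ex_intro _ a (fun b => iff_refl _)).

Definition qmap : hom A quot.
Proof.
  refine (@Hom _ A quot qcls _). intros x a b h. exists a, b.
  destruct H as [Hr [_ Hle]].
  split; [split; apply Hr|split; [split; apply Hr|apply Hle; exact h]].
Defined.

Lemma qmap_surj : surjective_h qmap.
Proof.
  intros x P. destruct P as [P [a Ha]]. exists a. apply cls_eq. intro z; simpl.
  split; intro h; apply Ha; exact h.
Qed.
End Quot.

Section CongOrd.
Context {Xi : Type} (M : Monad Xi).

Definition cong_cond (A : sPos Xi) (pi : hom (MO M A) A) R (H : cong_pre A R) : Prop :=
  forall x (s t : car (MO M A) x),
    le (MO M (quot A R H)) (app (Mmap M (qmap A R H)) s) (app (Mmap M (qmap A R H)) t) ->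
    R x (app pi s) (app pi t).
Definition is_cong_ord (A : sPos Xi) (pi : hom (MO M A) A) R : Prop :=
  cong_pre A R /\ forall H : cong_pre A R, cong_cond A pi R H.

Context (Hs : preserves_surj M).

Definition pick_pre (A : sPos Xi) R (H : cong_pre A R) x
  (t : car (MO M (quot A R H)) x) : car (MO M A) x :=
  proj1_sig (constructive_indefinite_description _
               (Hs _ _ (qmap A R H) (qmap_surj A R H) x t)).
Lemma pick_pre_spec A R H x t :
  app (Mmap M (qmap A R H)) (pick_pre A R H x t) = t.
Proof. unfold pick_pre. destruct constructive_indefinite_description; assumption. Qed.

(* the product of the quotient algebra, determined by pi' o Mq = q o pi *)
Definition quot_prod (A : sPos Xi) (pi : hom (MO M A) A) R (H : cong_pre A R)
  (Hc : cong_cond A pi R H) : hom (MO M (quot A R H)) (quot A R H).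
Proof.
  refine (Hom (fun x t => app (qmap A R H) (app pi (pick_pre A R H x t))) _).
  intros x t t' h. exists (app pi (pick_pre A R H x t)), (app pi (pick_pre A R H x t')).
  destruct H as [Hr [Ht Hle]] eqn:EH.
  split; [split; apply Hr|split; [split; apply Hr|]].
  apply Hc. rewrite !pick_pre_spec. exact h.
Defined.
End CongOrd.

Record PreAlg {Xi : Type} (M : Monad Xi) := { pa : sPos Xi; pam : hom (MO M pa) pa }.
Arguments pa {Xi M} _.
Arguments pam {Xi M} _.

Record LFamily {Xi : Type} (M : Monad Xi) := {
  form : Alphabet Xi -> Xi -> Type;
  sat : forall S x, form S x -> car (FA M S) x -> Prop;
  lam : forall (S G : Alphabet Xi) (f : forall x, acar S x -> acar G x) x, form G x -> form S x;
  lam_sat : forall S G f x (phi : form G x) (s : car (FA M S) x),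
      sat S x (lam S G f x phi) s <->
      sat G x phi (app (Mmap M (hom_of_disc (B := disc (acar G)) f)) s) }.
Arguments form {Xi M} _ _ _.
Arguments sat {Xi M} _ {S x} _ _.
Arguments lam {Xi M} _ {S G} f {x} _.

Section Logics.
Context {Xi : Type} {M : Monad Xi} (L : LFamily M).

Definition lattice_closed (S : Alphabet Xi) : Prop :=
  forall x (l : list (form L S x)),
    (exists chi : form L S x, forall s, sat L chi s <-> exists phi, In phi l /\ sat L phi s) /\
    (exists chi : form L S x, forall s, sat L chi s <-> forall phi, In phi l -> sat L phi s).

Definition definable (S : Alphabet Xi) x (K : car (FA M S) x -> Prop) : Prop :=
  exists phi : form L S x, forall s, sat L phi s <-> K s.

Definition iota_h (C : sPos Xi) : hom (disc (car C)) C := hom_of_disc (fun x a => a).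
Definition ord_definable (C : sPos Xi) (HC : fin_total (car C)) x
  (K : car (MO M C) x -> Prop) : Prop :=
  definable (Build_Alphabet (car C) HC) x (fun u => K (app (Mmap M (iota_h C)) u)).

Definition subfam := forall S x, form L S x -> Prop.
Definition lequiv {S x} (phi psi : form L S x) : Prop :=
  forall s, sat L phi s <-> sat L psi s.
Definition fin_subfam (D : subfam) : Prop :=
  forall S, exists l : list {x : Xi & form L S x},
      (forall p, In p l -> D S (projT1 p) (projT2 p)) /\
      forall x phi, D S x phi -> exists psi, In (existT _ x psi) l /\ lequiv phi psi.
Definition sfin_subfam (D : subfam) : Prop :=
  forall S x, exists l : list (form L S x),
      (forall psi, In psi l -> D S x psi) /\
      forall phi, D S x phi -> exists psi, In psi l /\ lequiv phi psi.

Definition leD (D : subfam) (S : Alphabet Xi) : forall x, car (FA M S) x -> car (FA M S) x -> Prop :=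
  fun x s t => forall phi, D S x phi -> sat L phi s -> sat L phi t.

Definition compositional : Prop :=
  forall Phi : subfam, fin_subfam Phi ->
    exists D : subfam, (forall S x phi, Phi S x phi -> D S x phi) /\ sfin_subfam D /\
      forall S, is_cong_ord M (FA M S) (flat M _) (leD D S).

Definition Theta (Hs : preserves_surj M) (D : subfam) (S : Alphabet Xi)
  (H : cong_pre (FA M S) (leD D S))
  (Hc : cong_cond M (FA M S) (flat M _) (leD D S) H) : PreAlg M :=
  {| pa := quot (FA M S) (leD D S) H;
     pam := quot_prod M Hs (FA M S) (flat M _) (leD D S) H Hc |}.

Definition finitary (A : PreAlg M) : Prop :=
  sortwise_fin (car (pa A)) /\
  exists P : forall x, car (pa A) x -> Prop,
    fin_total (car (sub (pa A) P)) /\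
    forall x (a : car (pa A) x), exists s : car (MO M (sub (pa A) P)) x,
        app (pam A) (app (Mmap M (incl (pa A) P)) s) = a.
Definition definably_embedded (A : PreAlg M) (P : forall x, car (pa A) x -> Prop)
  (HP : fin_total (car (sub (pa A) P))) : Prop :=
  forall x (a : car (pa A) x),
    ord_definable (sub (pa A) P) HP x
      (fun s => le (pa A) a (app (pam A) (app (Mmap M (incl (pa A) P)) s))).
Definition alg_definable (A : PreAlg M) : Prop :=
  finitary A /\
  forall P (HP : fin_total (car (sub (pa A) P))), definably_embedded A P HP.

Definition union_closed : Prop :=
  forall S x (l : list (car (FA M S) x -> Prop)), Forall (definable S x) l ->
    definable S x (fun s => exists K, In K l /\ K s).
Definition inter_closed : Prop :=
  forall S x (l : list (car (FA M S) x -> Prop)), Forall (definable S x) l ->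
    definable S x (fun s => forall K, In K l -> K s).
Definition inv_morph_closed : Prop :=
  forall (S G : Alphabet Xi) (psi : hom (FA M S) (FA M G)), alg_mor M S G psi ->
    forall x (K : car (FA M G) x -> Prop), definable G x K ->
      definable S x (fun s => K (app psi s)).
Definition deriv_closed : Prop :=
  forall (S : Alphabet Xi) z x (p : car (FA M (boxA S z)) x) (K : car (FA M S) x -> Prop),
    definable S x K -> definable S z (fun s => K (plug M S z x p s)).
Definition varietal : Prop :=
  union_closed /\ inter_closed /\ inv_morph_closed /\ deriv_closed.

Definition theory_algs_definable (Hs : preserves_surj M) : Prop :=
  forall D : subfam, sfin_subfam D ->
    forall HD : (forall G, is_cong_ord M (FA M G) (flat M _) (leD D G)),
      forall S, alg_definable (Theta Hs D S (proj1 (HD S)) (proj2 (HD S) (proj1 (HD S)))).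
End Logics.

(* (1) => (3) is part of the definition of a variety.

   (3) => (2): a class of the theory ordering [leD D S] is determined by which of the
   finitely many formulae of Delta it satisfies, so Theta_Delta Sigma is finite in
   each sort; it is generated by the images of the letters.  For a finite subset C,
   choosing a representative in M Sigma of every element of C yields an algebra
   morphism psi : M C -> M Sigma, and the set of u with a <= pi(u) is the
   psi-preimage of the Delta-definable upset of a representative of a.

   (2) => (1): for K = Mod(phi), compositionality gives a Delta containing phi, so K
   is [leD]-upward closed and is the preimage of an upset of the finite algebra
   Theta_Delta Gamma, i.e. a finite union of principal upsets.  Every morphism
   M Sigma -> M Gamma is the Kleisli extension of a letter map, whose image is a
   definably embedded subset of Theta_Delta Gamma, so psi^-1[K] is definable.
   Derivatives are the case of the identity morphism: p^-1[K] is again [leD]-upward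
   closed because [leD] is a congruence, hence compatible with contexts. *)

From Stdlib Require Import List Classical ClassicalEpsilon Eqdep.
Import ListNotations.

Section QuotientMap.
Context {Xi : Type} (A : sPos Xi) (R : forall x, car A x -> car A x -> Prop) (H : cong_pre A R).

Lemma qmap_le x (a b : car A x) :
  le (quot A R H) (app (qmap A R H) a) (app (qmap A R H) b) <-> R x a b.
Proof.
  pose proof H as [Hr [Ht _]]. cbn; unfold qle, qcls, Req; cbn. split.
  - intros [a' [b' [[h1 h2] [[h3 h4] h5]]]]. eauto.
  - intro h. exists a, b. repeat split; auto.
Qed.

Lemma qmap_eq x (a b : car A x) :
  R x a b -> R x b a -> app (qmap A R H) a = app (qmap A R H) b.
Proof.
  intros h1 h2. pose proof H as [Hr [Ht _]].
  apply cls_eq; cbn; unfold Req; intro z. split; intros [u v]; split; eauto.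
Qed.
End QuotientMap.

Section KleisliExtension.
Context {Xi : Type} (M : Monad Xi).

Definition kext {A B : sPos Xi} (f : hom A (MO M B)) : hom (MO M A) (MO M B) :=
  hcomp (flat M B) (Mmap M f).

Lemma Mmap_comp_ext {A B C : sPos Xi} (f : hom A B) (g : hom B C) (h : hom A C) :
  (forall x (a : car A x), app g (app f a) = app h a) ->
  forall x (s : car (MO M A) x), app (Mmap M g) (app (Mmap M f) s) = app (Mmap M h) s.
Proof. intros e x s. rewrite <- Mmap_comp. apply Mmap_ext. exact e. Qed.

Lemma kext_ext {A B : sPos Xi} (f g : hom A (MO M B)) :
  (forall x (a : car A x), app f a = app g a) ->
  forall x (s : car (MO M A) x), app (kext f) s = app (kext g) s.
Proof. intros e x s. cbn. f_equal. apply Mmap_ext. exact e. Qed.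

Lemma kext_sing (A : sPos Xi) x (s : car (MO M A) x) : app (kext (sing M A)) s = s.
Proof. apply flat_Msing. Qed.

Lemma kext_flat {A B : sPos Xi} (f : hom A (MO M B)) x (s : car (MO M (MO M A)) x) :
  app (kext f) (app (flat M A) s) = app (flat M B) (app (Mmap M (kext f)) s).
Proof. cbn. rewrite flat_nat, flat_flat. f_equal. symmetry. apply Mmap_comp. Qed.

Lemma flat_morphism_kext {A B : sPos Xi} (psi : hom (MO M A) (MO M B)) :
  (forall x (s : car (MO M (MO M A)) x),
      app psi (app (flat M A) s) = app (flat M B) (app (Mmap M psi) s)) ->
  forall x (s : car (MO M A) x), app psi s = app (kext (hcomp psi (sing M A))) s.
Proof.
  intros hpsi x s.
  transitivity (app psi (app (flat M A) (app (Mmap M (sing M A)) s))).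
  { now rewrite flat_Msing. }
  rewrite hpsi. cbn. f_equal. symmetry. apply Mmap_comp.
Qed.

Context (Hs : preserves_surj M).

Lemma quot_prod_qmap (A : sPos Xi) pi R H Hc x (u : car (MO M A) x) :
  app (quot_prod M Hs A pi R H Hc) (app (Mmap M (qmap A R H)) u)
  = app (qmap A R H) (app pi u).
Proof. apply (qmap_eq A R H); apply Hc; rewrite pick_pre_spec; apply le_refl. Qed.

Lemma quot_prod_kext {B C : sPos Xi} R H Hc (g : hom C (MO M B))
  (k : hom C (quot (MO M B) R H)) :
  (forall x (c : car C x), app k c = app (qmap _ R H) (app g c)) ->
  forall x (s : car (MO M C) x),
    app (quot_prod M Hs (MO M B) (flat M B) R H Hc) (app (Mmap M k) s)
    = app (qmap _ R H) (app (kext g) s).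
Proof.
  intros hk x s. rewrite <- (Mmap_comp_ext g (qmap _ R H) k); [|intros; symmetry; apply hk].
  apply (quot_prod_qmap (MO M B) (flat M B)).
Qed.

Lemma cong_ord_plug (Hstd : std_ordering M) (S : Alphabet Xi) R
  (HR : is_cong_ord M (FA M S) (flat M _) R) z x (p : car (FA M (boxA S z)) x)
  (s t : car (FA M S) z) :
  R z s t -> R x (plug M S z x p s) (plug M S z x p t).
Proof.
  intro hst. destruct HR as [H Hc]. apply (Hc H).
  set (Q := quot (FA M S) R H).
  set (q := qmap (FA M S) R H).
  assert (hle : forall y (c : boxcar (acar S) z y),
     le Q (app q (app (plug_map M S z s) c)) (app q (app (plug_map M S z t) c))).
  { intros y [a|[]]; [apply le_refl | apply (qmap_le _ _ H), hst]. }
  set (k := hom_of_disc (B := lepairs Q)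
       (fun y c => exist (fun pr : car Q y * car Q y => le Q (fst pr) (snd pr))
                    (app q (app (plug_map M S z s) c), app q (app (plug_map M S z t) c))
                    (hle y c))).
  apply Hstd. exists (app (Mmap M k) p).
  split.
  - rewrite (Mmap_comp_ext _ _ (hcomp q (plug_map M S z s))); [apply Mmap_comp | reflexivity].
  - rewrite (Mmap_comp_ext _ _ (hcomp q (plug_map M S z t))); [apply Mmap_comp | reflexivity].
Qed.
End KleisliExtension.

Fixpoint sublists {T} (l : list T) : list (list T) :=
  match l with [] => [[]] | a :: l => map (cons a) (sublists l) ++ sublists l end.

Lemma sublists_filter {T} (l : list T) (Q : T -> Prop) :
  exists m, In m (sublists l) /\ forall t, In t m <-> In t l /\ Q t.
Proof.
  induction l as [|a l [m [hm hmi]]]; cbn.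
  - exists []. split; [left; reflexivity | cbn; tauto].
  - destruct (classic (Q a)) as [qa|nqa].
    + exists (a :: m). split; [apply in_or_app; left; apply in_map, hm|].
      intro t; cbn; rewrite hmi. split; [intros [<-|[]]|intros [[<-|] ?]]; auto.
    + exists m. split; [apply in_or_app; right; exact hm|].
      intro t; rewrite hmi. split; [intros []|intros [[<-|] ?]]; auto; contradiction.
Qed.

(* One value of [f] per sublist of [l] realised as the set of predicates true at some point. *)
Lemma image_finite_of_signature {T U} (l : list (T -> Prop)) (f : T -> U) :
  (forall a b, (forall P, In P l -> (P a <-> P b)) -> f a = f b) ->
  exists lu : list U, forall a, In (f a) lu.
Proof.
  intro hf.
  exists (flat_map (fun m =>
    match excluded_middle_informative (exists a, forall P, In P m <-> In P l /\ P a) with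
    | left e => [f (proj1_sig (constructive_indefinite_description _ e))]
    | right _ => []
    end) (sublists l)).
  intro a. destruct (sublists_filter l (fun P => P a)) as [m [hm hma]].
  apply in_flat_map. exists m. split; [exact hm|].
  destruct excluded_middle_informative as [e|ne]; [|exfalso; apply ne; exists a; exact hma].
  destruct (constructive_indefinite_description _ e) as [b hmb]; cbn. left.
  apply hf. intros P hP. pose proof (hma P). pose proof (hmb P). tauto.
Qed.

Section Image.
Context {Xi : Type} {S : Alphabet Xi} {B : sPos Xi} (g : forall x, acar S x -> car B x).

Definition img : forall x, car B x -> Prop := fun x c => exists a, c = g x a.

Definition img_corestr : forall x, acar S x -> car (sub B img) x :=
  fun x a => exist _ (g x a) (ex_intro _ a eq_refl).

Lemma img_fin : fin_total (car (sub B img)).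
Proof.
  destruct (afin S) as [l Hl].
  exists (map (fun p => existT (car (sub B img)) (projT1 p) (img_corestr _ (projT2 p))) l).
  intros x [c [a ->]].
  exact (in_map (fun p => existT (car (sub B img)) (projT1 p) (img_corestr _ (projT2 p)))
           l (existT _ x a) (Hl x a)).
Qed.
End Image.

Section Definability.
Context {Xi : Type} {M : Monad Xi} (L : LFamily M).

Lemma definable_ext S x (K K' : car (FA M S) x -> Prop) :
  definable L S x K -> (forall s, K s <-> K' s) -> definable L S x K'.
Proof. intros [phi Hp] h. exists phi. intro s. rewrite Hp. apply h. Qed.

Lemma definable_comap (S G : Alphabet Xi) (f : forall x, acar S x -> acar G x) x
  (K : car (FA M G) x -> Prop) :
  definable L G x K ->
  definable L S x (fun s => K (app (Mmap M (hom_of_disc (B := disc (acar G)) f)) s)).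
Proof. intros [phi Hp]. exists (lam L f phi). intro s. rewrite lam_sat. apply Hp. Qed.

Context (S : Alphabet Xi) (Hl : lattice_closed L S) (x : Xi).

Lemma definable_Union {T} (l : list T) (K : T -> car (FA M S) x -> Prop) :
  (forall t, In t l -> definable L S x (K t)) ->
  definable L S x (fun s => exists t, In t l /\ K t s).
Proof.
  induction l as [|a l IH]; intro hd.
  - destruct (Hl x []) as [[chi Hc] _]. exists chi. intro s. rewrite Hc.
    split; intros [? [[] _]].
  - destruct IH as [chi1 H1]; [intros t ht; apply hd; right; exact ht|].
    destruct (hd a (or_introl eq_refl)) as [phi Hp].
    destruct (Hl x [phi; chi1]) as [[chi Hc] _]. exists chi. intro s. rewrite Hc. split.
    + intros [f [[<-|[<-|[]]] hs]].
      * exists a. split; [left; reflexivity | apply Hp, hs].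
      * apply H1 in hs as [t [ht hk]]. exists t. split; [right|]; assumption.
    + intros [t [[<-|ht] hk]].
      * exists phi. split; [left; reflexivity | apply Hp, hk].
      * exists chi1. split; [right; left; reflexivity | apply H1; exists t; auto].
Qed.

Lemma definable_Inter (l : list (car (FA M S) x -> Prop)) :
  (forall K, In K l -> definable L S x K) ->
  definable L S x (fun s => forall K, In K l -> K s).
Proof.
  induction l as [|a l IH]; intro hd.
  - destruct (Hl x []) as [_ [chi Hc]]. exists chi. intro s. rewrite Hc.
    split; intros _ ? [].
  - destruct IH as [chi1 H1]; [intros t ht; apply hd; right; exact ht|].
    destruct (hd a (or_introl eq_refl)) as [phi Hp].
    destruct (Hl x [phi; chi1]) as [_ [chi Hc]]. exists chi. intro s. rewrite Hc. split.
    + intros h K [<-|hK].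
      * apply Hp, h; left; reflexivity.
      * apply H1; [apply h; right; left; reflexivity | exact hK].
    + intros h f [<-|[<-|[]]].
      * apply Hp, h; left; reflexivity.
      * apply H1; intros K hK; apply h; right; exact hK.
Qed.
End Definability.

Section TheoryAlgebra.
Context {Xi : Type} {M : Monad Xi} (Hs : preserves_surj M) (L : LFamily M).
Context (D : subfam L) (Dfin : sfin_subfam L D) (S : Alphabet Xi).
Context (H : cong_pre (FA M S) (leD L D S)) (Hc : cong_cond M (FA M S) (flat M _) (leD L D S) H).

Lemma leD_upset_definable (HlS : lattice_closed L S) x (a : car (FA M S) x) :
  definable L S x (leD L D S x a).
Proof.
  destruct (Dfin S x) as [l [hl hcov]].
  destruct (sublists_filter l (fun psi => sat L psi a)) as [m [_ hm]].
  destruct (HlS x m) as [_ [chi hchi]].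
  exists chi. intro u. rewrite hchi. split.
  - intros h phi hphi hsat. destruct (hcov phi hphi) as [psi [hin heq]].
    apply heq, h, hm. split; [exact hin | apply heq, hsat].
  - intros h psi hin. apply hm in hin as [hin hs]. exact (h psi (hl psi hin) hs).
Qed.

Lemma Theta_sortwise_fin : sortwise_fin (car (quot (FA M S) (leD L D S) H)).
Proof.
  intro x. destruct (Dfin S x) as [l [_ hcov]].
  destruct (image_finite_of_signature (map (fun psi => sat L psi) l)
              (@app _ _ _ (qmap _ _ H) x)) as [lc hlc].
  - intros a b hab. apply qmap_eq; intros phi hphi hsat;
      destruct (hcov phi hphi) as [psi [hin heq]]; apply heq; apply heq in hsat;
      apply (hab (sat L psi) (in_map _ _ _ hin)), hsat.
  - exists lc. intro c. destruct (qmap_surj _ _ H x c) as [a <-]. apply hlc.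
Qed.

Lemma Theta_finitary : finitary (Theta L Hs D S H Hc).
Proof.
  split; [exact Theta_sortwise_fin|].
  set (g := fun y (a : acar S y) => app (qmap _ _ H) (app (sing M (disc (acar S))) a)).
  exists (img g). split; [apply img_fin|].
  intros x c. destruct (qmap_surj _ _ H x c) as [s <-].
  exists (app (Mmap M (hom_of_disc (img_corestr g))) s). cbn [pa pam Theta].
  rewrite <- Mmap_comp. unfold FA in *.
  rewrite (quot_prod_kext M Hs _ _ _ (sing M _)); [|reflexivity].
  now rewrite kext_sing.
Qed.

Lemma Theta_definably_embedded (HlS : lattice_closed L S) (Hinv : inv_morph_closed L)
  P (HP : fin_total (car (sub (quot (FA M S) (leD L D S) H) P))) :
  definably_embedded L (Theta L Hs D S H Hc) P HP.
Proof.
  intros x c.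
  set (C := Build_Alphabet _ HP).
  set (r := fun y (c : acar C y) =>
         proj1_sig (constructive_indefinite_description _ (qmap_surj _ _ H y (proj1_sig c)))).
  assert (hr : forall y c, app (qmap _ _ H) (r y c) = proj1_sig c).
  { intros y c'. unfold r. destruct constructive_indefinite_description; assumption. }
  set (psi := kext M (hom_of_disc (B := FA M S) r) : hom (FA M C) (FA M S)).
  destruct (qmap_surj _ _ H x c) as [a <-].
  eapply definable_ext.
  - exact (Hinv C S psi (kext_flat M _) x _ (leD_upset_definable HlS x a)).
  - intro u. cbn [pa pam Theta].
    rewrite <- Mmap_comp. unfold FA in *.
    rewrite (quot_prod_kext M Hs _ _ _ (hom_of_disc (B := FA M S) r)).
    + now rewrite qmap_le.
    + intros y c'. symmetry. apply hr.
Qed.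
End TheoryAlgebra.

Lemma inv_morph_closed_theory_algs_definable {Xi : Type} {M : Monad Xi}
  (Hs : preserves_surj M) (L : LFamily M) (Hlat : forall S, lattice_closed L S) :
  inv_morph_closed L -> theory_algs_definable L Hs.
Proof.
  intros Hinv D Dfin HD S. split.
  - apply Theta_finitary, Dfin.
  - intros P HP. apply Theta_definably_embedded; [exact Dfin | apply Hlat | exact Hinv].
Qed.

Section DefinableAlgebras.
Context {Xi : Type} {M : Monad Xi} (L : LFamily M) (Hlat : forall S, lattice_closed L S).

Lemma alg_definable_upset (A : PreAlg M) (HA : alg_definable L A) P HP x
  (V : car (pa A) x -> Prop) :
  (forall b c, le (pa A) b c -> V b -> V c) ->
  ord_definable L (sub (pa A) P) HP x
    (fun u => V (app (pam A) (app (Mmap M (incl (pa A) P)) u))).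
Proof.
  intros Vup. destruct HA as [[Afin _] Aemb].
  destruct (Afin x) as [lc Hlc].
  destruct (sublists_filter lc V) as [m [_ Hm]].
  eapply definable_ext.
  - apply (definable_Union L _ (Hlat _) x m), (fun c _ => Aemb P HP x c).
  - intro u. split.
    + intros [c [hc hle]]. apply Hm in hc as [_ hc]. exact (Vup _ _ hle hc).
    + intro hV. eexists. split; [apply Hm; split; [apply Hlc | exact hV] | apply le_refl].
Qed.

Context (Hs : preserves_surj M) (D : subfam L).

Lemma Theta_upset_kext_definable (G S : Alphabet Xi) (H : cong_pre (FA M G) (leD L D G))
  (Hc : cong_cond M (FA M G) (flat M _) (leD L D G) H)
  (HTh : alg_definable L (Theta L Hs D G H Hc)) x (U : car (FA M G) x -> Prop)
  (Uup : forall s t, leD L D G x s t -> U s -> U t)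
  (g : forall y, acar S y -> car (FA M G) y) :
  definable L S x (fun s => U (app (kext M (hom_of_disc (B := FA M G) g)) s)).
Proof.
  set (q := qmap _ _ H).
  set (V := fun c => exists v, U v /\ c = app q v).
  assert (hV : forall t, V (app q t) <-> U t).
  { intro t. split; [|intro hU; exists t; auto].
    intros [v [hv e]]. apply (Uup v); [|exact hv].
    apply (qmap_le _ _ H). fold q. rewrite e. apply le_refl. }
  assert (Vup : forall b c, le (pa (Theta L Hs D G H Hc)) b c -> V b -> V c).
  { intros b c hbc [v [hv ->]]. destruct (qmap_surj _ _ H x c) as [w <-].
    apply hV. apply (Uup v); [apply (qmap_le _ _ H), hbc | exact hv]. }
  set (gq := fun y a => app q (g y a)).
  pose proof (alg_definable_upset _ HTh (img gq) (img_fin gq) x V Vup) as hdef.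
  eapply definable_ext.
  { exact (definable_comap L S (Build_Alphabet _ (img_fin gq)) (img_corestr gq) x _ hdef). }
  intro s. cbn [pa pam Theta]. rewrite <- !Mmap_comp. unfold FA in *.
  rewrite (quot_prod_kext M Hs _ _ _ (hom_of_disc (B := FA M G) g)); [apply hV|reflexivity].
Qed.
End DefinableAlgebras.

Section Varietal.
Context {Xi : Type} {M : Monad Xi} (L : LFamily M).

Definition single_subfam (G : Alphabet Xi) x (phi : form L G x) : subfam L :=
  fun S' x' psi => existT (fun S0 => {x0 : Xi & form L S0 x0}) S' (existT _ x' psi)
                   = existT _ G (existT _ x phi).

Lemma single_subfam_fin G x (phi : form L G x) : fin_subfam L (single_subfam G x phi).
Proof.
  intro S'.
  destruct (classic (exists p : {x' & form L S' x'},
                        single_subfam G x phi S' (projT1 p) (projT2 p))) as [[p hp]|np].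
  - exists [p]. split; [intros p' [<-|[]]; exact hp|].
    intros x' psi hpsi. exists psi. split; [|intro s; reflexivity]. left.
    unfold single_subfam in *. rewrite <- hpsi in hp. apply inj_pair2 in hp.
    destruct p; exact hp.
  - exists []. split; [intros p []|]. intros x' psi hpsi. exfalso. apply np.
    exists (existT _ x' psi). exact hpsi.
Qed.

Lemma cong_subfam_of_formula (Hcomp : compositional L) G x (phi : form L G x) :
  exists D : subfam L, sfin_subfam L D /\ D G x phi /\
    forall S, is_cong_ord M (FA M S) (flat M _) (leD L D S).
Proof.
  destruct (Hcomp _ (single_subfam_fin G x phi)) as [D [hsub [hfin HD]]].
  exists D. split; [exact hfin|]. split; [apply hsub; reflexivity | exact HD].
Qed.

Context (HM : nice_monad M) (Hcomp : compositional L) (Hlat : forall S, lattice_closed L S).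

Lemma theory_algs_definable_varietal :
  theory_algs_definable L (nm_surj M HM) -> varietal L.
Proof.
  intro Hth.
  assert (HTh : forall G x (phi : form L G x),
    exists D (HD : forall S, is_cong_ord M (FA M S) (flat M _) (leD L D S)), D G x phi /\
      forall S, alg_definable L
                  (Theta L (nm_surj M HM) D S (proj1 (HD S)) (proj2 (HD S) (proj1 (HD S))))).
  { intros G x phi. destruct (cong_subfam_of_formula Hcomp G x phi) as [D [Dfin [hD HD]]].
    exists D, HD. split; [exact hD | exact (Hth D Dfin HD)]. }
  split; [|split; [|split]].
  - intros S x l hl. apply definable_Union; [apply Hlat|].
    intros K hK. rewrite Forall_forall in hl. exact (hl K hK).
  - intros S x l hl. apply definable_Inter; [apply Hlat|].
    rewrite <- Forall_forall. exact hl.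
  - intros S G psi hpsi x K [phi Hphi].
    destruct (HTh G x phi) as [D [HD [hD Hal]]].
    eapply definable_ext.
    + apply (Theta_upset_kext_definable L Hlat _ D G S _ _ (Hal G) x K) with
        (g := fun y a => app psi (app (sing M (disc (acar S))) a)).
      intros s t hst hs. apply Hphi, (hst phi hD), Hphi, hs.
    + intro s. unfold FA in *. rewrite (flat_morphism_kext M psi hpsi x s).
      now rewrite (kext_ext M (hom_of_disc _) (hcomp psi (sing M _))).
  - intros S z x p K [phi Hphi].
    destruct (HTh S x phi) as [D [HD [hD Hal]]].
    eapply definable_ext.
    + apply (Theta_upset_kext_definable L Hlat _ D S S _ _ (Hal S) z
               (fun s => K (plug M S z x p s))) with
        (g := fun y a => app (sing M (disc (acar S))) a).
      intros s t hst hs. apply Hphi.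
      apply (cong_ord_plug M (nm_std M HM) S _ (HD S) z x p s t hst phi hD), Hphi, hs.
    + intro s. cbn beta. now rewrite (kext_ext M _ (sing M _)), kext_sing.
Qed.
End Varietal.

Theorem theorem9p6 (Xi : Type) (M : Monad Xi) (HM : nice_monad M) (L : LFamily M)
  (Hcomp : compositional L) (Hlat : forall S, lattice_closed L S) :
  (varietal L <-> theory_algs_definable L (nm_surj M HM)) /\
  (theory_algs_definable L (nm_surj M HM) <-> inv_morph_closed L).
Proof.
  pose proof (theory_algs_definable_varietal L HM Hcomp Hlat) as Hvar.
  pose proof (inv_morph_closed_theory_algs_definable (nm_surj M HM) L Hlat) as Hinv.
  assert (Hvar_inv : varietal L -> inv_morph_closed L) by (intros [_ [_ [h _]]]; exact h).
  tauto.
Qed.
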